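(* The real flag manifold $\mathbb F_\Theta$ of type $C_4$ with $\Theta=\{\lambda_1-\lambda_2,\lambda_3-\lambda_4\}$ does not admit $K$-invariant almost complex structures.
   Context: $\mathfrak g=\mathfrak{sp}(4,\mathbb R)$ (split real form of type $C_4$) with Iwasawa decomposition $\mathfrak g=\mathfrak k\oplus\mathfrak a\oplus\mathfrak n$, roots $\pm\lambda_i\pm\lambda_j$ ($i<j$), $\pm2\lambda_i$, simple roots $\lambda_1-\lambda_2,\lambda_2-\lambda_3,\lambda_3-\lambda_4,2\lambda_4$. For $\Theta$ a set of simple roots, $\mathfrak p_\Theta=\mathfrak a\oplus\sum_{\alpha>0}\mathfrak g_\alpha\oplus\sum_{\alpha\in\langle\Theta\rangle^-}\mathfrak g_\alpha$ where $\langle\Theta\rangle^-$ are the negative roots generated by $\Theta$; $G$ is the inner automorphism group of $\mathfrak g$, $K$ its maximal compact subgroup, $P_\Theta$ the normalizer of $\mathfrak p_\Theta$ in $G$, $K_\Theta=K\cap P_\Theta$, $\mathbb F_\Theta=G/P_\Theta=K/K_\Theta$. $K$-invariant means invariant under the left action of $K$. *)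

From HB Require Import structures.
From mathcomp Require Import all_boot all_order all_algebra.
From mathcomp Require Import Rstruct.
From Stdlib Require List.
Set Implicit Arguments. Unset Strict Implicit. Unset Printing Implicit Defensive.
Import Order.TTheory GRing.Theory Num.Theory.
Local Open Scope ring_scope.

Notation RR := Rdefinitions.R.
Notation mat := 'M[RR]_8.

Definition Om : mat := block_mx (0 : 'M[RR]_4) 1%:M (- 1%:M) 0.

Definition sp4 (X : mat) : Prop := X^T *m Om + Om *m X = 0.

Definition Hdiag (h : 'rV[RR]_4) : mat :=
  block_mx (diag_mx h) 0 0 (- diag_mx h).

(* Linear functionals on a, written in the basis lambda_1..lambda_4
   (coordinate j of c is the coefficient of lambda_(j+1)). *)
Definition functional := 'I_4 -> int.
Definition fval (c : functional) (h : 'rV[RR]_4) : RR :=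
  \sum_(j < 4) (c j)%:~R * h 0 j.

Definition root_space (c : functional) (X : mat) : Prop :=
  sp4 X /\ forall h, Hdiag h *m X - X *m Hdiag h = fval c h *: X.

Definition is_root (c : functional) : Prop :=
  (exists j, c j != 0) /\ exists X, root_space c X /\ X != 0.

Definition lam (i : nat) : functional := fun j => ((i == j)%N)%:Z.

Definition simple (k : nat) : functional := fun j =>
  match k with
  | 0 => lam 0 j - lam 1 j
  | 1 => lam 1 j - lam 2 j
  | 2 => lam 2 j - lam 3 j
  | _ => 2%:Z * lam 3 j
  end.

Definition positive_root (c : functional) : Prop :=
  is_root c /\ exists n : 'I_4 -> nat,
    forall j, c j = \sum_(k < 4) (n k)%:Z * simple k j.

(* Theta = {lambda1 - lambda2, lambda3 - lambda4};
   <Theta>^- = negative roots generated by Theta *)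
Definition theta_neg_root (c : functional) : Prop :=
  is_root c /\ exists n1 n3 : nat,
    forall j, c j = - ((n1%:Z) * simple 0 j + (n3%:Z) * simple 2 j).

Definition pTheta (X : mat) : Prop :=
  exists (h : 'rV[RR]_4) (s : seq (functional * mat)),
    (forall p, List.In p s ->
       (positive_root p.1 \/ theta_neg_root p.1) /\ root_space p.1 p.2) /\
    X = Hdiag h + \sum_(p <- s) p.2.

(* Ad(k) X = k X k^{-1} for k orthogonal *)
Definition Ad (k X : mat) : mat := k *m X *m k^T.

(* K = Ad(Sp(4,R) ∩ O(8)) = Ad(U(4)), the maximal compact subgroup of
   G = Int(g) = Ad(Sp(4,R)); we work with representing matrices k. *)
Definition inK (k : mat) : Prop := k^T *m k = 1%:M /\ k^T *m Om *m k = Om.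

(* K_Theta = K ∩ P_Theta, P_Theta = normalizer of p_Theta in G *)
Definition inKTheta (k : mat) : Prop :=
  inK k /\ forall X, pTheta X <-> pTheta (Ad k X).

(* Lie algebras k and k_Theta = k ∩ p_Theta; T_o F_Theta = k / k_Theta *)
Definition kk (X : mat) : Prop := sp4 X /\ X^T = - X.
Definition kTheta (X : mat) : Prop := kk X /\ pTheta X.

(* A K-invariant almost complex structure on F_Theta = K/K_Theta, given by
   its value at the origin: a linear map J on k preserving k_Theta, hence
   a linear endomorphism of k/k_Theta, with J^2 = -1 on k/k_Theta and
   commuting with the isotropy representation Ad(K_Theta) on k/k_Theta. *)
Definition K_invariant_acs (J : mat -> mat) : Prop :=
  (forall (a : RR) X Y, J (a *: X + Y) = a *: J X + J Y) /\
  (forall X, kk X -> kk (J X)) /\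
  (forall X, kTheta X -> kTheta (J X)) /\
  (forall X, kk X -> kTheta (J (J X) + X)) /\
  (forall k X, inKTheta k -> kk X -> kTheta (J (Ad k X) - Ad k (J X))).

From HB Require Import structures.
From mathcomp Require Import all_boot all_order all_algebra.
From mathcomp Require Import Rstruct lra zify.
Set Implicit Arguments. Unset Strict Implicit. Unset Printing Implicit Defensive.
Import Order.TTheory GRing.Theory Num.Theory.
Local Open Scope ring_scope.

(* The sign matrices diag(e, e), e in {+-1}^4, centralize a, hence normalize every
   root space and lie in K_Theta.  Let X0 in k be the element coming from the root
   spaces of +-(lambda_1 + lambda_2); it is not in p_Theta, and the sign matrices act on
   it by the character chi(e) = e_1 e_2.  The only other direction of k on which they
   act by chi is Z, built from the root spaces of +-(lambda_1 - lambda_2), which lies in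
   k_Theta; so averaging against chi shows that anything transforming by chi modulo
   k_Theta is congruent to some b X0.  As J commutes with K_Theta modulo k_Theta,
   J X0 = b X0 mod k_Theta, and then -X0 = J^2 X0 = b^2 X0, i.e. (1 + b^2) X0 lies in
   k_Theta: a contradiction. *)

Section SubspaceClosure.
Variables (R : pzRingType) (V : lmodType R) (W : V -> Prop).
Hypotheses (W0 : W 0) (W_lin : forall a x y, W x -> W y -> W (a *: x + y)).

Lemma subspace_scale a x : W x -> W (a *: x).
Proof. by move=> Wx; rewrite -[a *: x]addr0; apply: W_lin. Qed.

Lemma subspace_add x y : W x -> W y -> W (x + y).
Proof. by move=> Wx Wy; rewrite -[x]scale1r; apply: W_lin. Qed.

Lemma subspace_sub x y : W x -> W y -> W (x - y).
Proof. by move=> Wx Wy; rewrite -scaleN1r addrC; apply: W_lin. Qed.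

End SubspaceClosure.

Section LinearCombinationMap.
Variables (R : pzRingType) (U V : lmodType R) (f : U -> V).
Hypothesis f_lin : forall a x y, f (a *: x + y) = a *: f x + f y.

Lemma lincomb_map0 : f 0 = 0.
Proof.
have f00 := f_lin 1 0 0; rewrite !scale1r addr0 in f00.
by apply: (@addrI _ (f 0)); rewrite addr0 -f00.
Qed.

Lemma lincomb_mapZ a x : f (a *: x) = a *: f x.
Proof. by rewrite -[a *: x]addr0 f_lin lincomb_map0 addr0. Qed.

End LinearCombinationMap.

Section EigenvectorModulo.
Variables (R : realFieldType) (V : lmodType R) (W : V -> Prop) (J : V -> V).
Hypotheses (W0 : W 0) (W_lin : forall a x y, W x -> W y -> W (a *: x + y)).
Hypotheses (J_lin : forall a x y, J (a *: x + y) = a *: J x + J y).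
Hypothesis J_W : forall x, W x -> W (J x).

Lemma real_eigenvector_mod_mem x b : W (J (J x) + x) -> W (J x - b *: x) -> W x.
Proof.
move=> WJJx WJxb.
have J_sub y z : J (y - b *: z) = J y - b *: J z.
  by rewrite [y - _]addrC -!scaleNr J_lin addrC.
have WJJ : W (J (J x) - b *: J x) by rewrite -J_sub; apply: J_W.
have b2_neq0 : 1 + b ^+ 2 != 0 by rewrite lt0r_neq0 // ltr_wpDr ?sqr_ge0.
have -> : x = (1 + b ^+ 2)^-1 *:
    ((x + J (J x)) - ((J (J x) - b *: J x) + b *: (J x - b *: x))).
  rewrite scalerBr scalerA -expr2 subrKA addrKA opprK -{2}(scale1r x).
  by rewrite -scalerDl scalerA mulVf ?scale1r.
apply: subspace_scale => //; apply: subspace_sub => //; first by rewrite addrC.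
by apply: subspace_add => //; apply: subspace_scale.
Qed.

End EigenvectorModulo.

(* Block calculus at type mat rather than 'M_(4 + 4), so that it rewrites the 8 x 8
   matrices of the definitions. *)
Notation blk A B C D := (block_mx A B C D : mat).

Section BlockAlgebra.
Implicit Types A B C D : 'M[RR]_4.

Lemma tr_blk A B C D : (blk A B C D)^T = blk A^T C^T B^T D^T.
Proof. exact: (@tr_block_mx _ 4 4 4 4). Qed.

Lemma mul_blk A B C D A' B' C' D' : blk A B C D *m blk A' B' C' D' =
  blk (A *m A' + B *m C') (A *m B' + B *m D') (C *m A' + D *m C') (C *m B' + D *m D').
Proof. exact: (@mulmx_block _ 4 4 4 4 4 4). Qed.

Lemma add_blk A B C D A' B' C' D' :
  blk A B C D + blk A' B' C' D' = blk (A + A') (B + B') (C + C') (D + D').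
Proof. exact: (@add_block_mx _ 4 4 4 4). Qed.

Lemma opp_blk A B C D : - blk A B C D = blk (- A) (- B) (- C) (- D).
Proof. exact: (@opp_block_mx _ 4 4 4 4). Qed.

Lemma scale_blk a A B C D : a *: blk A B C D = blk (a *: A) (a *: B) (a *: C) (a *: D).
Proof. exact: (@scale_block_mx _ 4 4 4 4). Qed.

Lemma eq_blk A B C D A' B' C' D' :
  blk A B C D = blk A' B' C' D' -> [/\ A = A', B = B', C = C' & D = D'].
Proof. exact: (@eq_block_mx _ 4 4 4 4). Qed.

Lemma blk0 : blk (0 : 'M[RR]_4) 0 0 0 = 0.
Proof. exact: (@block_mx0 _ 4 4 4 4). Qed.

Lemma blk1 : blk (1%:M : 'M[RR]_4) 0 0 1%:M = 1%:M.
Proof. by rewrite (@scalar_mx_block _ 4 4). Qed.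

End BlockAlgebra.

Ltac simp_blk := rewrite ?(mulmx0, mul0mx, addr0, add0r, mulmx1, mul1mx, mulmxN, mulNmx,
  trmx0, oppr0, opprK).

Lemma sp4_lin a X Y : sp4 X -> sp4 Y -> sp4 (a *: X + Y).
Proof.
rewrite /sp4 => spX spY.
rewrite linearP /= mulmxDl mulmxDr -scalemxAl -scalemxAr.
by rewrite addrACA -scalerDr spX spY scaler0 addr0.
Qed.

Lemma kk_lin a X Y : kk X -> kk Y -> kk (a *: X + Y).
Proof.
move=> [spX skX] [spY skY]; split; first exact: sp4_lin.
by rewrite linearP /= skX skY scalerN opprD.
Qed.

Lemma root_space_lin c a X Y :
  root_space c X -> root_space c Y -> root_space c (a *: X + Y).
Proof.
move=> [spX adX] [spY adY]; split=> [|h]; first exact: sp4_lin.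
rewrite mulmxDr mulmxDl -scalemxAl -scalemxAr opprD addrACA -scalerBr adX adY.
by rewrite scalerDr !scalerA mulrC.
Qed.

Lemma root_space0 c : root_space c 0.
Proof. by split=> [|h]; rewrite /sp4 ?trmx0 ?mulmx0 ?mul0mx ?subrr ?scaler0 ?addr0. Qed.

Lemma root_space_scale c a X : root_space c X -> root_space c (a *: X).
Proof. exact: (subspace_scale (root_space0 c) (@root_space_lin c)). Qed.

Lemma Hdiag_lin a h1 h2 : Hdiag (a *: h1 + h2) = a *: Hdiag h1 + Hdiag h2.
Proof. by rewrite /Hdiag linearP scale_blk add_blk !scaler0 addr0 opprD scalerN. Qed.

Lemma pTheta_lin a X Y : pTheta X -> pTheta Y -> pTheta (a *: X + Y).
Proof.
move=> [h1 [s1 [roots1 ->]]] [h2 [s2 [roots2 ->]]].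
exists (a *: h1 + h2), ([seq (p.1, a *: p.2) | p <- s1] ++ s2); split.
  move=> p /(@List.in_app_or _ _ _ p) [|]; last exact: roots2.
  move=> /List.in_map_iff [q [<- s1q]]; have [q_root q_space] := roots1 q s1q.
  by split=> //=; apply: root_space_scale.
rewrite Hdiag_lin big_cat big_map /= scalerDr scaler_sumr.
by rewrite -!addrA; congr (_ + _); rewrite addrCA.
Qed.

Lemma kTheta0 : kTheta 0.
Proof.
split; first by split; rewrite /sp4 ?trmx0 ?mulmx0 ?mul0mx ?addr0 ?oppr0.
by exists 0, [::]; split=> //; rewrite big_nil addr0 /Hdiag raddf0 oppr0 block_mx0.
Qed.

Lemma kTheta_lin a X Y : kTheta X -> kTheta Y -> kTheta (a *: X + Y).
Proof. by move=> [kX pX] [kY pY]; split; [apply: kk_lin | apply: pTheta_lin]. Qed.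

Lemma kTheta_add X Y : kTheta X -> kTheta Y -> kTheta (X + Y).
Proof. exact: (subspace_add kTheta_lin). Qed.

Lemma kTheta_scale a X : kTheta X -> kTheta (a *: X).
Proof. exact: (subspace_scale kTheta0 kTheta_lin). Qed.

Lemma tr_Om : Om^T = - Om.
Proof. by rewrite /Om tr_blk opp_blk !trmx0 raddfN /= !trmx1 opprK oppr0. Qed.

Lemma tr_Hdiag h : (Hdiag h)^T = Hdiag h.
Proof. by rewrite /Hdiag tr_blk !trmx0 raddfN /= tr_diag_mx. Qed.

Definition inM (k : mat) : Prop :=
  [/\ k^T *m k = 1%:M, k *m Om = Om *m k & forall h, k *m Hdiag h = Hdiag h *m k].

Section CentralizerOfA.
Variable k : mat.
Hypothesis Mk : inM k.

Lemma tr_commute (A : mat) : A^T = A \/ A^T = - A -> k *m A = A *m k -> k^T *m A = A *m k^T.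
Proof.
move=> trA kA; have := congr1 trmx kA; rewrite !trmx_mul.
by case: trA => ->; rewrite ?mulmxN ?mulNmx; [move-> | move/oppr_inj->].
Qed.

Lemma inM_tr : inM k^T.
Proof.
have [orth kOm kH] := Mk; split; first by rewrite trmxK; apply: mulmx1C.
  by apply: tr_commute => //; right; apply: tr_Om.
by move=> h; apply: tr_commute => //; left; apply: tr_Hdiag.
Qed.

Lemma Ad_sp4 X : sp4 X -> sp4 (Ad k X).
Proof.
have [_ kOm _] := Mk; have [_ ktOm _] := inM_tr.
rewrite /sp4 /Ad trmx_mul trmxK trmx_mul => spX.
have -> : k *m (X^T *m k^T) *m Om + Om *m (k *m X *m k^T) = k *m (X^T *m Om + Om *m X) *m k^T.
  by rewrite mulmxDr mulmxDl; congr (_ + _); [rewrite -!mulmxA ktOm | rewrite !mulmxA kOm].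
by rewrite spX mulmx0 mul0mx.
Qed.

Lemma Ad_root_space c X : root_space c X -> root_space c (Ad k X).
Proof.
move=> [spX adX]; split=> [|h]; first exact: Ad_sp4.
have [_ _ kH] := Mk; have [_ _ ktH] := inM_tr.
have -> : Hdiag h *m Ad k X - Ad k X *m Hdiag h = Ad k (Hdiag h *m X - X *m Hdiag h).
  by rewrite /Ad mulmxBr mulmxBl !mulmxA -kH -!mulmxA ktH.
by rewrite adX /Ad -scalemxAr -scalemxAl.
Qed.

Lemma Ad_Hdiag h : Ad k (Hdiag h) = Hdiag h.
Proof.
have [_ _ kH] := Mk; have [orth' _ _] := inM_tr; rewrite trmxK in orth'.
by rewrite /Ad kH -mulmxA orth' mulmx1.
Qed.

Lemma Ad_pTheta X : pTheta X -> pTheta (Ad k X).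
Proof.
move=> [h [s [roots ->]]].
exists h, [seq (p.1, Ad k p.2) | p <- s]; split.
  move=> p /List.in_map_iff [q [<- sq]]; have [q_root q_space] := roots q sq.
  by split=> //=; apply: Ad_root_space.
by rewrite big_map /Ad mulmxDr mulmxDl -/(Ad k _) Ad_Hdiag mulmx_sumr mulmx_suml.
Qed.

End CentralizerOfA.

Lemma inM_KTheta k : inM k -> inKTheta k.
Proof.
move=> Mk; have [orth kOm _] := Mk; split.
  by split=> //; rewrite -mulmxA -kOm mulmxA orth mul1mx.
move=> X; split; first exact: Ad_pTheta.
have AdK : Ad k^T (Ad k X) = X.
  by rewrite /Ad trmxK !mulmxA orth mul1mx -mulmxA orth mulmx1.
by rewrite -{2}AdK; apply: Ad_pTheta; apply: inM_tr.
Qed.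

Lemma kk_blk Y : kk Y -> exists A B : 'M[RR]_4, [/\ A^T = - A, B^T = B & Y = blk A B (- B) A].
Proof.
rewrite /kk /sp4 -(submxK (Y : 'M_(4 + 4))).
move: (ulsubmx _) (ursubmx _) (dlsubmx _) (drsubmx _) => A B C D [spY skY].
move: skY; rewrite tr_blk opp_blk => /eq_blk [skA trBC _ trDA].
move: spY; rewrite tr_blk /Om !mul_blk; simp_blk; rewrite add_blk -blk0.
move=> /eq_blk [CB _ DA BB].
rewrite trBC opprK in CB; rewrite trDA opprK in DA.
exists A, B; split=> //; first by apply/eqP; rewrite -subr_eq0 BB.
have -> : C = - B by apply/eqP; rewrite -subr_eq0 opprK addrC CB.
by have -> : D = A by apply/eqP; rewrite -subr_eq0 DA.
Qed.

Lemma blk_kk (A B : 'M[RR]_4) : A^T = - A -> B^T = B -> kk (blk A B (- B) A).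
Proof.
move=> skA symB; split.
  rewrite /sp4 /Om tr_blk !mul_blk add_blk -blk0; simp_blk.
  by rewrite raddfN /= skA symB !opprK !subrr addNr.
by rewrite tr_blk opp_blk raddfN /= skA symB opprK.
Qed.

Definition sign_mx (e : 'rV[RR]_4) : mat := blk (diag_mx e) 0 0 (diag_mx e).

Definition conj_diag (e : 'rV[RR]_4) (M : 'M[RR]_4) := diag_mx e *m M *m diag_mx e.

Lemma conj_diagE e M i j : conj_diag e M i j = e 0 i * M i j * e 0 j.
Proof. by rewrite /conj_diag mul_mx_diag mul_diag_mx !mxE. Qed.

Lemma Ad_sign_blk e (A B C D : 'M[RR]_4) :
  Ad (sign_mx e) (blk A B C D) = blk (conj_diag e A) (conj_diag e B) (conj_diag e C) (conj_diag e D).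
Proof. by rewrite /Ad /sign_mx tr_blk !mul_blk; simp_blk; rewrite !tr_diag_mx. Qed.

Lemma sign_mx_inM (e : 'rV[RR]_4) : (forall j, e 0 j ^+ 2 = 1) -> inM (sign_mx e).
Proof.
move=> e_sq; have sq : diag_mx e *m diag_mx e = 1%:M.
  by apply/matrixP=> i j; rewrite mul_diag_mx !mxE; case: eqVneq => [->|_]; rewrite -?expr2 ?e_sq ?mulr0.
rewrite /inM /sign_mx tr_blk tr_diag_mx !mul_blk; simp_blk; rewrite sq blk1; split=> //.
by move=> h; rewrite /Hdiag !mul_blk; simp_blk; rewrite diag_mxC.
Qed.

Lemma fval_lam (i : 'I_4) h : fval (lam i) h = h 0 i.
Proof.
rewrite /fval (bigD1 i) //= big1 => [|j ji]; first by rewrite /lam eqxx mul1r addr0.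
by rewrite /lam val_eqE eq_sym (negbTE ji) mul0r.
Qed.

Definition lam_sub (i j : 'I_4) : functional := fun l => lam i l - lam j l.

Lemma fval_lam_sub i j h : fval (lam_sub i j) h = h 0 i - h 0 j.
Proof.
rewrite -!fval_lam /fval -sumrB; apply: eq_bigr => l _.
by rewrite /lam_sub intrD intrN mulrBl.
Qed.

Lemma diag_delta_comm n (h : 'rV[RR]_n) (i j : 'I_n) :
  diag_mx h *m delta_mx i j - delta_mx i j *m diag_mx h = (h 0 i - h 0 j) *: delta_mx i j.
Proof.
apply/matrixP=> k l; rewrite mul_diag_mx mul_mx_diag !mxE.
by case: eqVneq => [->|]; case: eqVneq => [->|] //= *; rewrite ?mulr1 ?mul1r ?mulr0 ?mul0r ?subrr.
Qed.

Definition root_vec (i j : 'I_4) : mat := blk (delta_mx i j) 0 0 (- delta_mx j i).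

Lemma root_vec_root_space i j : root_space (lam_sub i j) (root_vec i j).
Proof.
split.
  by rewrite /sp4 /root_vec /Om tr_blk !mul_blk add_blk -blk0; simp_blk; rewrite raddfN /= !trmx_delta opprK !subrr.
move=> h; rewrite /root_vec /Hdiag !mul_blk; simp_blk; rewrite opp_blk add_blk; simp_blk.
by rewrite !diag_delta_comm fval_lam_sub scale_blk scaler0 scalerN -scaleNr opprB.
Qed.

Lemma root_vec_neq0 i j : root_vec i j != 0.
Proof.
apply/eqP => /(congr1 (fun M : mat => M (lshift 4 i) (lshift 4 j))).
by rewrite /root_vec (@block_mxEul _ 4 4 4 4) !mxE !eqxx => /eqP; rewrite oner_eq0.
Qed.

Lemma lam_sub_is_root (i j : 'I_4) : i != j -> is_root (lam_sub i j).
Proof.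
move=> ij; split; last by exists (root_vec i j); split; [apply: root_vec_root_space | apply: root_vec_neq0].
by exists i; move: ij; rewrite /lam_sub /lam eqxx -val_eqE eq_sym => /negbTE ->.
Qed.

Notation i0 := (inord 0 : 'I_4).
Notation i1 := (inord 1 : 'I_4).

Lemma i0_neq_i1 : i0 != i1.
Proof. by rewrite -val_eqE /= !inordK. Qed.

Lemma lam_sub01_positive : positive_root (lam_sub i0 i1).
Proof.
split; first exact/lam_sub_is_root/i0_neq_i1.
exists (fun k : 'I_4 => (k == 0 :> nat)%N) => j.
by rewrite !big_ord_recr big_ord0 /= /lam_sub !inordK // !mul0r !addr0 add0r mul1r.
Qed.

Lemma lam_sub10_theta_neg : theta_neg_root (lam_sub i1 i0).
Proof.
split; first by apply/lam_sub_is_root; rewrite eq_sym i0_neq_i1.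
by exists 1%N, 0%N => j; rewrite /lam_sub /simple !inordK // mul1r mul0r addr0 opprB.
Qed.

Notation E01 := (delta_mx i0 i1 : 'M[RR]_4).
Notation E10 := (delta_mx i1 i0 : 'M[RR]_4).

Definition X0 : mat := blk 0 (E01 + E10) (- (E01 + E10)) 0.
Definition Z : mat := blk (E01 - E10) 0 0 (E01 - E10).

Lemma X0_kk : kk X0.
Proof. by apply: blk_kk; rewrite ?trmx0 ?oppr0 // raddfD /= !trmx_delta addrC. Qed.

Lemma Z_kTheta : kTheta Z.
Proof.
split.
  have -> : Z = blk (E01 - E10) 0 (- 0) (E01 - E10) by rewrite oppr0.
  apply: blk_kk; last exact: trmx0.
  by rewrite raddfB /= !trmx_delta opprB.
exists 0, [:: (lam_sub i0 i1, root_vec i0 i1); (lam_sub i1 i0, - root_vec i1 i0)]; split.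
  move=> p /= [<-|[<-|//]]; split=> /=.
  - by left; apply: lam_sub01_positive.
  - exact: root_vec_root_space.
  - by right; apply: lam_sub10_theta_neg.
  - by rewrite -scaleN1r; apply/root_space_scale/root_vec_root_space.
rewrite /Hdiag raddf0 oppr0 blk0 add0r !big_cons big_nil addr0 /Z /root_vec opp_blk add_blk.
by simp_blk; rewrite addrC.
Qed.

Lemma fval_delta c i : fval c (delta_mx 0 i) = (c i)%:~R.
Proof.
rewrite /fval (bigD1 i) //= big1 => [|j ji]; first by rewrite mxE !eqxx mulr1 addr0.
by rewrite mxE (negbTE ji) andbF mulr0.
Qed.

Lemma root_space_blk_dl c (A B C D : 'M[RR]_4) h i j : root_space c (blk A B C D) ->
  fval c h * C i j = - (h 0 i + h 0 j) * C i j.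
Proof.
move=> [_ /(_ h)]; rewrite /Hdiag !mul_blk; simp_blk; rewrite opp_blk add_blk scale_blk.
move=> /eq_blk [_ _ /(congr1 (fun M : 'M[RR]_4 => M i j)) + _].
rewrite mul_diag_mx mul_mx_diag !mxE => <-.
by rewrite mulNr mulrDl opprD [_ * h 0 j]mulrC.
Qed.

Lemma root_space_blk_dl_coef c (A B C D : 'M[RR]_4) i j :
  root_space c (blk A B C D) -> i != j -> C i j != 0 -> c i = -1 /\ c j = -1.
Proof.
move=> Yc ij Cij.
have coef (h : 'rV[RR]_4) k : fval c h = (c k)%:~R -> h 0 i + h 0 j = 1 -> c k = -1.
  move=> hc hij; have := root_space_blk_dl h i j Yc.
  rewrite hc hij mulN1r -mulN1r => /(mulIf Cij) ck.
  by apply: (@intr_inj RR); rewrite ck rmorphN rmorph1.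
split; apply: (coef (delta_mx 0 _)); rewrite ?fval_delta // !mxE !eqxx.
  by rewrite eq_sym (negbTE ij) addr0.
by rewrite (negbTE ij) add0r.
Qed.

Lemma neg_lam01_not_pTheta_root c :
  c i0 = -1 -> c i1 = -1 -> ~ (positive_root c \/ theta_neg_root c).
Proof.
move=> c0 c1 [[_ [n /(_ i0)]] | [_ [n1 [n3 /(_ i1)]]]].
  by rewrite c0 !big_ord_recr big_ord0 /= /simple /lam !inordK.
by rewrite c1 /simple /lam !inordK //=; lia.
Qed.

Lemma pTheta_dlsub01 X : pTheta X -> dlsubmx (X : 'M_(4 + 4)) i0 i1 = 0.
Proof.
move=> [h [s [roots ->]]].
rewrite /dlsubmx !raddfD /= !raddf_sum /= -/(dlsubmx _) (@block_mxKdl _ 4 4 4 4) add0r summxE.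
elim: s roots => [|p s IHs] roots; first by rewrite big_nil.
rewrite big_cons IHs => [|q sq]; last by apply: roots; right.
have [p_root p_space] := roots p (or_introl erefl).
rewrite -(submxK (p.2 : 'M_(4 + 4))) in p_space.
rewrite addr0; apply/eqP; apply: contraT => p01.
have [c0 c1] := root_space_blk_dl_coef p_space i0_neq_i1 p01.
by case: (neg_lam01_not_pTheta_root c0 c1).
Qed.

Lemma X0_notin_pTheta : ~ pTheta X0.
Proof.
move/pTheta_dlsub01/eqP; rewrite /X0 (@block_mxKdl _ 4 4 4 4) !mxE !eqxx.
by rewrite eq_sym (negbTE i0_neq_i1) /= addr0 eq_sym oppr_eq0 oner_eq0.
Qed.

Definition chi (e : 'rV[RR]_4) : RR := e 0 i0 * e 0 i1.

Lemma conj_diag_delta e i j : conj_diag e (delta_mx i j) = (e 0 i * e 0 j) *: delta_mx i j.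
Proof.
apply/matrixP=> k l; rewrite conj_diagE !mxE.
by case: eqVneq => [->|]; case: eqVneq => [->|] //= *; rewrite ?mulr1 ?mulr0 ?mul0r.
Qed.

Lemma Ad_sign_X0 e : Ad (sign_mx e) X0 = chi e *: X0.
Proof.
rewrite /X0 Ad_sign_blk scale_blk /conj_diag; simp_blk.
rewrite !(mulmxDl, mulmxDr) -!/(conj_diag e _) !conj_diag_delta /chi [e 0 i1 * _]mulrC.
by rewrite scaler0 scalerN scalerDr.
Qed.

Definition flip (b0 b1 : bool) : 'rV[RR]_4 :=
  \row_(j < 4) (if (b0 && (j == i0)) || (b1 && (j == i1)) then -1 else 1).

Lemma flip_sq b0 b1 j : flip b0 b1 0 j ^+ 2 = 1.
Proof. by rewrite mxE; case: ifP; rewrite ?sqrrN expr1n. Qed.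

Lemma chi_flip b0 b1 : chi (flip b0 b1) = (-1) ^+ b0 * (-1) ^+ b1.
Proof.
rewrite /chi !mxE !eqxx (negbTE i0_neq_i1) eq_sym (negbTE i0_neq_i1) !andbF !orbF.
by case: b0; case: b1; rewrite /= ?mulr1 ?mul1r.
Qed.

Lemma ord4P (i : 'I_4) : [\/ i = inord 0, i = inord 1, i = inord 2 | i = inord 3].
Proof.
case: i => [[|[|[|[|n]]]] Hn]; [apply: Or41|apply: Or42|apply: Or43|apply: Or44|by []];
  by apply: val_inj; rewrite /= inordK.
Qed.

Lemma flip_avg (M : 'M[RR]_4) :
  4^-1 *: (M - conj_diag (flip true false) M - conj_diag (flip false true) M
             + conj_diag (flip true true) M) = M i0 i1 *: E01 + M i1 i0 *: E10.
Proof.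
apply/matrixP=> k l; rewrite /conj_diag !mul_mx_diag !mul_diag_mx !mxE.
by case: (ord4P k) => ->; case: (ord4P l) => ->; rewrite -!val_eqE /= !inordK //=; lra.
Qed.

(* The average of chi(e) Ad(sign_mx e) over the group generated by the two flips:
   the projection onto the chi-isotypic part. *)
Definition isotypic_proj (Y : mat) : mat :=
  4^-1 *: (Y - Ad (sign_mx (flip true false)) Y - Ad (sign_mx (flip false true)) Y
             + Ad (sign_mx (flip true true)) Y).

Lemma isotypic_proj_kk (A B : 'M[RR]_4) : A^T = - A -> B^T = B ->
  isotypic_proj (blk A B (- B) A) = A i0 i1 *: Z + B i0 i1 *: X0.
Proof.
move=> skA symB.
have A10 : A i1 i0 = - A i0 i1 by move/(congr1 (fun M : 'M[RR]_4 => M i0 i1)): skA; rewrite !mxE.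
have B10 : B i1 i0 = B i0 i1 by move/(congr1 (fun M : 'M[RR]_4 => M i0 i1)): symB; rewrite !mxE.
rewrite /isotypic_proj !Ad_sign_blk !opp_blk !add_blk scale_blk !flip_avg /Z /X0 !scale_blk add_blk.
by rewrite !mxE A10 B10 !scaler0 !addr0 !add0r !(scaleNr, scalerBr, scalerDr, scalerN, opprD).
Qed.

Lemma chi_isotypic_mod_kTheta Y : kk Y ->
  (forall b0 b1, kTheta (chi (flip b0 b1) *: Y - Ad (sign_mx (flip b0 b1)) Y)) ->
  exists b, kTheta (Y - b *: X0).
Proof.
move=> kY chiY; have [A [B [skA symB defY]]] := kk_blk kY.
pose T b0 b1 := chi (flip b0 b1) *: Y - Ad (sign_mx (flip b0 b1)) Y.
have avg : Y - isotypic_proj Y = 4^-1 *: (chi (flip true false) *: T true false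
    + chi (flip false true) *: T false true + chi (flip true true) *: T true true).
  rewrite /T !chi_flip /isotypic_proj; move: (Ad _ Y) (Ad _ Y) (Ad _ Y) => Y10 Y01 Y11.
  by apply/matrixP=> i j; rewrite !mxE /=; lra.
exists (B i0 i1).
have -> : Y - B i0 i1 *: X0 = (Y - isotypic_proj Y) + A i0 i1 *: Z.
  by rewrite [in isotypic_proj Y]defY isotypic_proj_kk // opprD addrA addrAC subrK.
apply: kTheta_add; last by apply: kTheta_scale; apply: Z_kTheta.
rewrite avg; apply: kTheta_scale.
by apply: kTheta_add; [apply: kTheta_add|]; apply: kTheta_scale; apply: chiY.
Qed.

Theorem proposition6 : ~ exists J : 'M[Rdefinitions.R]_8 -> 'M[Rdefinitions.R]_8, K_invariant_acs J.
Proof.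
move=> [J [J_lin [J_kk [J_kTheta [J_sq J_Ad]]]]].
have [b JX0] : exists b, kTheta (J X0 - b *: X0).
  apply: chi_isotypic_mod_kTheta => [|b0 b1]; first exact: J_kk X0_kk.
  have := J_Ad _ _ (inM_KTheta (sign_mx_inM (flip_sq b0 b1))) X0_kk.
  by rewrite Ad_sign_X0 (lincomb_mapZ J_lin).
apply: X0_notin_pTheta.
by case: (real_eigenvector_mod_mem kTheta0 kTheta_lin J_lin J_kTheta (J_sq _ X0_kk) JX0).
Qed.
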